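(* Let $x\in\{0,1\}^\infty$ have randomness rate $\tau$ for some constant $\tau>0$, and let $0<\sigma<\tau$. Then for every sufficiently large $n_0$ there is $n_1>n_0$ such that \[K(x(n_0+1:n_1)\mid x(1:n_0))>\sigma(n_1-n_0).\] Furthermore, there is an effective procedure that on input $n_0,\tau,\sigma$ computes such an $n_1$.
   Context: $x(n_1:n_2)$ denotes the substring of bits $n_1$ through $n_2$ of $x$ (bits indexed from 1). $K(u)$ is plain Kolmogorov complexity with respect to a fixed universal machine, and $K(u\mid v)=\min\{|p|: U(p,v)=u\}$ is conditional plain Kolmogorov complexity with respect to a fixed universal conditional machine $U$. A sequence $x$ has randomness rate $\sigma$ if $K(x(1:n))\ge\sigma n$ for all but finitely many $n$. *)

From mathcomp Require Import all_boot.
From mathcomp Require Import boolp.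
From Stdlib Require Import Reals.

Set Implicit Arguments.
Unset Strict Implicit.
Unset Printing Implicit Defensive.

(* Arguments are lists of nats; out-of-range accesses use default 0.  *)

Inductive code : Type :=
| CZero
| CSucc
| CProj (i : nat)
| CComp (f : code) (gs : list code)
| CPrec (f g : code)
| CMu (f : code).

Inductive eval : code -> list nat -> nat -> Prop :=
| eZero xs : eval CZero xs 0
| eSucc xs : eval CSucc xs (head 0 xs).+1
| eProj i xs : eval (CProj i) xs (nth 0 xs i)
| eComp f gs xs ys y :
    evals gs xs ys -> eval f ys y -> eval (CComp f gs) xs y
| ePrec0 f g xs y : eval f xs y -> eval (CPrec f g) (0 :: xs) y
| ePrecS f g n xs r y :
    eval (CPrec f g) (n :: xs) r -> eval g (n :: r :: xs) y ->
    eval (CPrec f g) (n.+1 :: xs) y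
| eMu f xs y :
    eval f (y :: xs) 0 ->
    (forall z, z < y -> exists w, w <> 0 /\ eval f (z :: xs) w) ->
    eval (CMu f) xs y
with evals : list code -> list nat -> list nat -> Prop :=
| esNil xs : evals nil xs nil
| esCons g gs xs y ys :
    eval g xs y -> evals gs xs ys -> evals (g :: gs) xs (y :: ys).

(* Bijective encoding of binary strings into nat (bijective base 2). *)
Fixpoint enc (s : seq bool) : nat :=
  match s with
  | [::] => 0
  | b :: s' => (enc s').*2 + (1 + b)
  end.

Definition machine1 := seq bool -> option (seq bool).
Definition machine2 := seq bool -> seq bool -> option (seq bool).

Definition pcomputable1 (M : machine1) : Prop :=
  exists c : code, forall p u, M p = Some u <-> eval c [:: enc p] (enc u).

Definition pcomputable2 (M : machine2) : Prop :=
  exists c : code, forall p v u,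
    M p v = Some u <-> eval c [:: enc p; enc v] (enc u).

Definition universal1 (U : machine1) : Prop :=
  pcomputable1 U /\
  forall M, pcomputable1 M -> exists c : nat, forall p u,
    M p = Some u -> exists q, size q <= size p + c /\ U q = Some u.

Definition universal2 (U : machine2) : Prop :=
  pcomputable2 U /\
  forall M, pcomputable2 M -> exists c : nat, forall p v u,
    M p v = Some u -> exists q, size q <= size p + c /\ U q v = Some u.

(* Plain Kolmogorov complexity: minimal program length
   (convention 0 if no program exists; never happens for universal U). *)
Definition K1 (U : machine1) (u : seq bool) : nat :=
  match pselect (exists n, `[< exists p, size p = n /\ U p = Some u >]) with
  | left h => ex_minn h
  | right _ => 0
  end.

Definition K2 (U : machine2) (u v : seq bool) : nat :=
  match pselect (exists n, `[< exists p, size p = n /\ U p v = Some u >]) with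
  | left h => ex_minn h
  | right _ => 0
  end.

(* Infinite binary sequence x : nat -> bool, bit i (1-indexed) is x (i-1).
   sub x n1 n2 = x(n1:n2), the bits n1..n2 (empty if n2 < n1). *)
Definition sub (x : nat -> bool) (n1 n2 : nat) : seq bool :=
  mkseq (fun i => x (n1.-1 + i)) (n2.+1 - n1).

Definition has_rate (U0 : machine1) (x : nat -> bool) (tau : R) : Prop :=
  exists N : nat, forall n : nat, (N <= n)%N ->
    (tau * INR n <= INR (K1 U0 (sub x 1 n)))%R.

(* Describing [x(1:n1)] costs at most a shortest description of the tail
   [x(n0+1:n1)] relative to the prefix [x(1:n0)], plus a self-delimiting copy of
   the prefix, i.e. [K(x(1:n1)) <= K(x(n0+1:n1) | x(1:n0)) + 2 n0 + O(1)].  With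
   rate [tau], the left side is at least [tau n1]; taking [n1 = (k+1) n0 + 1]
   with [k (tau - sigma) >= 3] leaves more than [sigma (n1 - n0)] for the
   conditional complexity once [n0] exceeds the constant.  For rational
   [tau = a/b] and [sigma = c/d] the least such [k] is found by unbounded search,
   so [n1] is partial recursive in [n0, a, b, c, d]. *)

From mathcomp Require Import all_boot.
From mathcomp Require Import boolp zify.
From Stdlib Require Import Reals Lra Lia.
(* Stdlib rebinds the [nat_scope] arithmetic notations; restore ssrnat's. *)
Import ssrnat.

(** * Partial recursive codes *)

Definition computes n (c : code) (F : seq nat -> nat) : Prop :=
  forall xs y, size xs = n -> eval c xs y <-> y = F xs.

Definition computes1 c (f : nat -> nat) := computes 1 c (fun xs => f (nth 0 xs 0)).
Definition computes2 c (f : nat -> nat -> nat) :=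
  computes 2 c (fun xs => f (nth 0 xs 0) (nth 0 xs 1)).

Lemma eq_computes {n c F} G :
  computes n c F -> (forall xs, size xs = n -> F xs = G xs) -> computes n c G.
Proof. by move=> Hc FG xs y Hxs; rewrite -FG //; apply: Hc. Qed.

Lemma computes_zero n : computes n CZero (fun _ => 0).
Proof. by move=> xs y _; split=> [H | ->]; [inversion H | constructor]. Qed.

Lemma computes_succ : computes1 CSucc succn.
Proof. by move=> xs y _; split=> [H | ->]; [inversion H | constructor]. Qed.

Lemma computes_proj n i : computes n (CProj i) (fun xs => nth 0 xs i).
Proof. by move=> xs y _; split=> [H | ->]; [inversion H | constructor]. Qed.

Lemma eval_CComp f gs xs y :
  eval (CComp f gs) xs y <-> exists2 ys, evals gs xs ys & eval f ys y.
Proof. by split=> [H | [ys H1 H2]]; [inversion H; exists ys | econstructor; eauto]. Qed.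

Lemma evals_nil xs ys : evals [::] xs ys <-> ys = [::].
Proof. by split=> [H | ->]; [inversion H | constructor]. Qed.

Lemma evals_cons g gs xs ys :
  evals (g :: gs) xs ys <->
  exists y ys', [/\ ys = y :: ys', eval g xs y & evals gs xs ys'].
Proof.
split=> [H | [y [ys' [-> Hg Hgs]]]]; last by constructor.
by inversion H; exists y, ys0.
Qed.

Lemma eval_CComp2 f g1 g2 xs y :
  eval (CComp f [:: g1; g2]) xs y <->
  exists y1 y2, [/\ eval g1 xs y1, eval g2 xs y2 & eval f [:: y1; y2] y].
Proof.
rewrite eval_CComp; split=> [[ys] | [y1 [y2 [H1 H2 Hf]]]].
  case/evals_cons=> y1 [ys1 [-> H1]] /evals_cons [y2 [ys2 [-> H2]]].
  by move/evals_nil=> ->; exists y1, y2.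
exists [:: y1; y2] => //; apply/evals_cons; exists y1, [:: y2]; split=> //.
by apply/evals_cons; exists y2, [::]; split=> //; apply/evals_nil.
Qed.

Fixpoint computes_all n (gs : seq code) (Gs : seq (seq nat -> nat)) : Prop :=
  match gs, Gs with
  | [::], [::] => True
  | g :: gs', G :: Gs' => computes n g G /\ computes_all n gs' Gs'
  | _, _ => False
  end.

Lemma evals_computes {n gs Gs xs} ys : computes_all n gs Gs -> size xs = n ->
  evals gs xs ys <-> ys = [seq G xs | G <- Gs].
Proof.
move=> + Hxs; elim: gs Gs ys => [|g gs IH] [|G Gs] ys //=; first by rewrite evals_nil.
case=> Hg Hgs; rewrite evals_cons; split=> [[y [ys' [-> Hy Hys']]] | ->].
  by rewrite ((Hg _ _ Hxs).1 Hy) ((IH _ _ Hgs).1 Hys').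
by exists (G xs), [seq G xs | G <- Gs]; split=> //; [apply/(Hg _ _ Hxs) | apply/(IH _ _ Hgs)].
Qed.

Lemma eval_CComp_total {n} f {gs Gs xs} y : computes_all n gs Gs -> size xs = n ->
  eval (CComp f gs) xs y <-> eval f [seq G xs | G <- Gs] y.
Proof.
move=> Hgs Hxs; rewrite eval_CComp; split=> [[ys] | Hf].
  by move/(evals_computes _ Hgs Hxs) => ->.
by exists [seq G xs | G <- Gs] => //; apply/(evals_computes _ Hgs Hxs).
Qed.

Lemma computes_comp {n f gs F Gs} : computes (size Gs) f F -> computes_all n gs Gs ->
  computes n (CComp f gs) (fun xs => F [seq G xs | G <- Gs]).
Proof.
by move=> Hf Hgs xs y Hxs; rewrite (eval_CComp_total _ _ Hgs Hxs); apply: Hf; rewrite size_map.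
Qed.

Lemma computes_comp1 {n f g F G} : computes1 f F -> computes n g G ->
  computes n (CComp f [:: g]) (fun xs => F (G xs)).
Proof. by move=> Hf Hg; apply: (@computes_comp n f [:: g] _ [:: G] Hf). Qed.

Lemma computes_comp2 {n f g1 g2 F G1 G2} :
  computes2 f F -> computes n g1 G1 -> computes n g2 G2 ->
  computes n (CComp f [:: g1; g2]) (fun xs => F (G1 xs) (G2 xs)).
Proof. by move=> Hf H1 H2; apply: (@computes_comp n f [:: g1; g2] _ [:: G1; G2] Hf). Qed.

Fixpoint prec_fun (F G : seq nat -> nat) k xs : nat :=
  if k is k'.+1 then G (k' :: prec_fun F G k' xs :: xs) else F xs.

Lemma computes_prec {n f g F G} : computes n f F -> computes n.+2 g G ->
  computes n.+1 (CPrec f g) (fun xs => prec_fun F G (head 0 xs) (behead xs)).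
Proof.
move=> Hf Hg [|k xs] y //= [Hxs]; subst n; elim: k y => [|k IH] y /=.
  by split=> [H | ->]; [inversion H; apply/Hf | constructor; apply/Hf].
split=> [H | ->]; last by apply: (ePrecS (r := prec_fun F G k xs)); [apply/IH | apply/Hg].
inversion H; subst; match goal with Hr : eval (CPrec f g) _ ?r |- _ =>
  move/IH: Hr => Er; subst r end; exact/Hg.
Qed.

Lemma computes1_prec {f g a G} h : computes 0 f (fun _ => a) -> computes2 g G ->
  h 0 = a -> (forall k, h k.+1 = G k (h k)) -> computes1 (CPrec f g) h.
Proof.
move=> Hf Hg h0 hS; apply: eq_computes (computes_prec Hf Hg) _.
by case=> [|k [|]] //= _; elim: k => //= k ->.
Qed.

Lemma computes2_prec {f g F G} h :
  computes1 f F ->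
  computes 3 g (fun xs => G (nth 0 xs 0) (nth 0 xs 1) (nth 0 xs 2)) ->
  (forall m, h 0 m = F m) -> (forall k m, h k.+1 m = G k (h k m) m) ->
  computes2 (CPrec f g) h.
Proof.
move=> Hf Hg h0 hS; apply: eq_computes (computes_prec Hf Hg) _.
by case=> [|k [|m [|]]] //= _; elim: k => //= k ->.
Qed.

Lemma eval_CMu {n f F xs} y : computes n.+1 f F -> size xs = n ->
  eval (CMu f) xs y <-> F (y :: xs) = 0 /\ forall z, z < y -> F (z :: xs) <> 0.
Proof.
move=> Hf Hxs; have Hf' z w : eval f (z :: xs) w <-> w = F (z :: xs) by apply: Hf; rewrite /= Hxs.
split=> [H | [H0 Hlt]].
  inversion H as [| | | | | | ? ? ? H0 Hlt]; subst; split; first by move/Hf': H0.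
  by move=> z /Hlt [w [Hw /Hf' Ew]]; rewrite -Ew.
constructor; first exact/Hf'.
by move=> z /Hlt Hz; exists (F (z :: xs)); split=> //; apply/Hf'.
Qed.

Lemma computes_CMu {n f F M} : computes n.+1 f F ->
  (forall xs, size xs = n -> F (M xs :: xs) = 0 /\ forall z, z < M xs -> F (z :: xs) <> 0) ->
  computes n (CMu f) M.
Proof.
move=> Hf HM xs y Hxs; rewrite (eval_CMu _ Hf Hxs); have [M0 Mlt] := HM xs Hxs.
split=> [[y0 ylt] | ->] //; apply/eqP; rewrite eqn_leq.
by apply/andP; split; rewrite leqNgt; apply/negP; [move/ylt | move/Mlt].
Qed.

(** * Arithmetic codes *)

Definition onec := CComp CSucc [:: CZero].
Lemma computes_onec n : computes n onec (fun _ => 1).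
Proof. exact: computes_comp1 computes_succ (computes_zero n). Qed.

Definition addc := CPrec (CProj 0) (CComp CSucc [:: CProj 1]).
Lemma computes_addc : computes2 addc addn.
Proof.
apply: (computes2_prec addn (F := fun m => m) (G := fun _ r _ => r.+1)) => //.
- exact: computes_proj.
- exact: computes_comp1 computes_succ (computes_proj 3 1).
Qed.

Definition mulc := CPrec CZero (CComp addc [:: CProj 1; CProj 2]).
Lemma computes_mulc : computes2 mulc muln.
Proof.
apply: (computes2_prec muln (F := fun _ => 0) (G := fun _ r m => r + m)) => //.
- exact: computes_zero.
- exact: computes_comp2 computes_addc (computes_proj 3 1) (computes_proj 3 2).
- by move=> k m; rewrite mulSnr.
Qed.

Definition predc := CPrec CZero (CProj 0).
Lemma computes_predc : computes1 predc predn.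
Proof.
apply: (computes1_prec predn (G := fun k _ => k)) => //; [exact: computes_zero | exact: computes_proj].
Qed.

Definition subc := CPrec (CProj 0) (CComp predc [:: CProj 1]).
Lemma computes_subc : computes2 subc (fun k m => m - k).
Proof.
apply: (computes2_prec (fun k m => m - k) (F := fun m => m) (G := fun _ r _ => r.-1)).
- exact: computes_proj.
- exact: computes_comp1 computes_predc (computes_proj 3 1).
- exact: subn0.
- by move=> k m; rewrite subnS.
Qed.

Definition oddc := CPrec CZero (CComp subc [:: CProj 1; onec]).
Lemma computes_oddc : computes1 oddc odd.
Proof.
apply: (computes1_prec odd (G := fun _ r => 1 - r)) => //.
- exact: computes_zero.
- exact: computes_comp2 computes_subc (computes_proj 2 1) (computes_onec 2).
- by move=> k /=; case: (odd k).
Qed.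

Definition halfc := CPrec CZero (CComp addc [:: CProj 1; CComp oddc [:: CProj 0]]).
Lemma computes_halfc : computes1 halfc half.
Proof.
apply: (computes1_prec half (G := fun k r => r + odd k)) => //.
- exact: computes_zero.
- exact: computes_comp2 computes_addc (computes_proj 2 1)
           (computes_comp1 computes_oddc (computes_proj 2 0)).
- by move=> k /=; rewrite uphalf_half addnC.
Qed.

Definition shrc := CPrec (CProj 0) (CComp halfc [:: CProj 1]).
Lemma computes_shrc : computes2 shrc (fun k m => m %/ 2 ^ k).
Proof.
apply: (computes2_prec (fun k m => m %/ 2 ^ k) (F := fun m => m) (G := fun _ r _ => r./2)).
- exact: computes_proj.
- exact: computes_comp1 computes_halfc (computes_proj 3 1).
- exact: divn1.
- by move=> k m; rewrite -divn2 -divnMA -expnSr.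
Qed.

Definition pow2c := CPrec onec (CComp addc [:: CProj 1; CProj 1]).
Lemma computes_pow2c : computes1 pow2c (expn 2).
Proof.
apply: (computes1_prec (expn 2) (G := fun _ r => r + r)) => //.
- exact: computes_onec.
- exact: computes_comp2 computes_addc (computes_proj 2 1) (computes_proj 2 1).
- by move=> k; rewrite expnS mul2n addnn.
Qed.

Definition lowc := CComp subc [:: CComp mulc [:: shrc; CComp pow2c [:: CProj 0]]; CProj 1].
Lemma computes_lowc : computes2 lowc (fun k m => m %% 2 ^ k).
Proof.
apply: eq_computes (computes_comp2 computes_subc
  (computes_comp2 computes_mulc computes_shrc (computes_comp1 computes_pow2c (computes_proj 2 0)))
  (computes_proj 2 1)) _.
by move=> xs _ /=; rewrite {1}(divn_eq (nth 0 xs 1) (2 ^ nth 0 xs 0)) addKn.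
Qed.

(** * Binary strings and a self-delimiting pairing *)

Fixpoint dec_fuel (fuel n : nat) : seq bool :=
  if fuel is fuel'.+1 then
    if n is 0 then [::] else (~~ odd n) :: dec_fuel fuel' (n.-1)./2
  else [::].
Definition dec n := dec_fuel n n.

Lemma enc_dec_fuel fuel n : n <= fuel -> enc (dec_fuel fuel n) = n.
Proof.
elim: fuel n => [|fuel IH] [|n] //= Hn.
rewrite IH; last by rewrite leq_half_double; lia.
by have := odd_double_half n; rewrite -!muln2; case: (odd n) => /=; lia.
Qed.

Lemma enc_dec n : enc (dec n) = n.
Proof. exact: enc_dec_fuel. Qed.

Lemma enc_inj : injective enc.
Proof.
elim=> [|b s IH] [|c t] //=; try lia.
move=> E; have := congr1 odd E; rewrite !oddD !odd_double.
by case: b E; case: c => //= E _; congr cons; apply: IH; lia.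
Qed.

Lemma dec_enc s : dec (enc s) = s.
Proof. by apply: enc_inj; rewrite enc_dec. Qed.

Lemma expn_size_le_enc s : 2 ^ size s <= (enc s).+1.
Proof. by elim: s => [|b s IH] //=; rewrite expnS; lia. Qed.

Lemma enc_lt_expn_size s : (enc s).+2 <= 2 ^ (size s).+1.
Proof. by elim: s => [|b s IH] //=; rewrite expnS; case: b; lia. Qed.

Lemma enc_cat u w : enc (u ++ w) = enc u + 2 ^ size u * enc w.
Proof. by elim: u => [|b u IH] /=; [lia | rewrite IH expnS; lia]. Qed.

Lemma exists_even_shift N : exists z, ~~ odd (N %/ 2 ^ z).
Proof. by exists N; rewrite divn_small // ltn_expl. Qed.

Definition trailing_ones N := ex_minn (exists_even_shift N).

Lemma trailing_onesP N m :
  ~~ odd (N %/ 2 ^ m) -> (forall z, z < m -> odd (N %/ 2 ^ z)) -> trailing_ones N = m.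
Proof.
move=> Hm Hlt; rewrite /trailing_ones; case: ex_minnP => k Hk Hmin.
apply/eqP; rewrite eqn_leq Hmin // leqNgt; apply/negP => /Hlt.
by rewrite (negbTE Hk).
Qed.

Definition onesc := CMu (CComp oddc [:: shrc]).
Lemma computes_onesc : computes1 onesc trailing_ones.
Proof.
apply: computes_CMu (computes_comp1 computes_oddc computes_shrc) _ => -[|N [|]] //= _.
rewrite /trailing_ones; case: ex_minnP => m Hm Hmin; split; first by case: odd Hm.
by move=> z Hz; case Ez: odd => //; have := Hmin z; rewrite Ez leqNgt Hz => /(_ isT).
Qed.

Lemma odd_pred_expn2 e : odd (2 ^ e).-1 = (0 < e).
Proof.
case: e => [|e] //; have : 0 < 2 ^ e by rewrite expn_gt0.
by rewrite expnS; case: (2 ^ e) => // k _; rewrite mul2n doubleS /= odd_double.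
Qed.

(* From the least significant bit: [m] ones, then a zero. *)
Lemma trailing_ones_marker X m : trailing_ones (X * 2 ^ m.+1 + (2 ^ m).-1) = m.
Proof.
have shift j : j <= m ->
    (X * 2 ^ m.+1 + (2 ^ m).-1) %/ 2 ^ j = X * 2 ^ (m - j).+1 + (2 ^ (m - j)).-1.
  move=> Hj; have -> : m = (m - j) + j by lia.
  rewrite addnK -addSn !expnD mulnA.
  have Hp : 0 < 2 ^ j by rewrite expn_gt0.
  have Hq : 0 < 2 ^ (m - j) by rewrite expn_gt0.
  set a := 2 ^ (m - j) in Hq *; set b := 2 ^ j in Hp *.
  have -> : (a * b).-1 = a.-1 * b + b.-1 by nia.
  by rewrite addnA -mulnDl divnMDl // divn_small ?addn0 //; lia.
apply: trailing_onesP => [|z Hz].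
  by rewrite shift // subnn expn0 expn1 addn0 muln2 odd_double.
rewrite shift; last exact: ltnW.
by rewrite oddD odd_pred_expn2 expnS mulnCA oddM /= subn_gt0 Hz.
Qed.

(* A self-delimiting pairing: reading from the least significant bit,
   [size u] ones and a zero announce the common width [(size u).+1] of the two
   fields that follow, holding [enc u] and then [enc p]. *)
Definition pair_code (u p : seq bool) : nat :=
  (enc p * 2 ^ (size u).+1 + enc u) * 2 ^ (size u).+1 + (2 ^ size u).-1.

Lemma pred_expn2_lt m : (2 ^ m).-1 < 2 ^ m.+1.
Proof. by have := expn_gt0 2 m; rewrite expnS /=; lia. Qed.

Definition unpair_body N := N %/ 2 ^ (trailing_ones N).+1.
Definition unpair_prog N := unpair_body N %/ 2 ^ (trailing_ones N).+1.
Definition unpair_input N := unpair_body N %% 2 ^ (trailing_ones N).+1.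

Lemma unpair_code u p :
  [/\ trailing_ones (pair_code u p) = size u,
      unpair_prog (pair_code u p) = enc p & unpair_input (pair_code u p) = enc u].
Proof.
have Hones := trailing_ones_marker (enc p * 2 ^ (size u).+1 + enc u) (size u).
have Hu : enc u < 2 ^ (size u).+1 by have := enc_lt_expn_size u; lia.
have Hmark := pred_expn2_lt (size u).
have Hbody : unpair_body (pair_code u p) = enc p * 2 ^ (size u).+1 + enc u.
  by rewrite /unpair_body Hones divnMDl ?expn_gt0 // divn_small ?addn0.
rewrite /unpair_prog /unpair_input Hbody Hones; split=> //.
  by rewrite divnMDl ?expn_gt0 // divn_small ?addn0.
by rewrite modnMDl modn_small.
Qed.

Lemma size_dec_pair_code u p : size (dec (pair_code u p)) <= size p + 2 * size u + 3.
Proof.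
have Hlo := expn_size_le_enc (dec (pair_code u p)); rewrite enc_dec in Hlo.
rewrite -(@leq_exp2l 2) //; apply: leq_trans Hlo _.
have -> : 2 ^ (size p + 2 * size u + 3) = 2 ^ (size p).+1 * 2 ^ (size u).+1 * 2 ^ (size u).+1
  by rewrite -!expnD; congr (_ ^ _); lia.
have Hu := enc_lt_expn_size u; have Hp := enc_lt_expn_size p.
have Hmark := pred_expn2_lt (size u).
rewrite /pair_code; set W := 2 ^ (size u).+1 in Hu Hmark *.
set P := 2 ^ (size p).+1 in Hp *; nia.
Qed.

Definition widthc := CComp CSucc [:: onesc].
Definition bodyc := CComp shrc [:: widthc; CProj 0].
Definition progc := CComp shrc [:: widthc; bodyc].
Definition inputc := CComp lowc [:: widthc; bodyc].

Lemma computes_bodyc : computes1 bodyc unpair_body.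
Proof. exact: computes_comp2 computes_shrc (computes_comp1 computes_succ computes_onesc) (computes_proj 1 0). Qed.

Lemma computes_progc : computes1 progc unpair_prog.
Proof. exact: computes_comp2 computes_shrc (computes_comp1 computes_succ computes_onesc) computes_bodyc. Qed.

Lemma computes_inputc : computes1 inputc unpair_input.
Proof. exact: computes_comp2 computes_lowc (computes_comp1 computes_succ computes_onesc) computes_bodyc. Qed.

Definition glue N W := unpair_input N + 2 ^ trailing_ones N * W.

Definition gluec :=
  CComp addc [:: CComp inputc [:: CProj 0];
                 CComp mulc [:: CComp pow2c [:: CComp onesc [:: CProj 0]]; CProj 1]].

Lemma computes_gluec : computes2 gluec glue.
Proof.
exact: computes_comp2 computes_addc (computes_comp1 computes_inputc (computes_proj 2 0))
  (computes_comp2 computes_mulc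
     (computes_comp1 computes_pow2c (computes_comp1 computes_onesc (computes_proj 2 0)))
     (computes_proj 2 1)).
Qed.

(* On input [dec (pair_code u p)], run [U] on program [p] with input [u] and
   prepend [u] to the result; the arithmetic form makes it computable on all
   inputs. *)
Definition concat_machine (U : machine2) : machine1 := fun q =>
  let N := enc q in
  omap (fun w => dec (glue N (enc w))) (U (dec (unpair_prog N)) (dec (unpair_input N))).

Definition concatc cU := CComp gluec [:: CProj 0; CComp cU [:: progc; inputc]].

Lemma eval_concatc cU N y :
  eval (concatc cU) [:: N] y <->
  exists2 W, eval cU [:: unpair_prog N; unpair_input N] W & y = glue N W.
Proof.
have HcU W : eval (CComp cU [:: progc; inputc]) [:: N] W <->
             eval cU [:: unpair_prog N; unpair_input N] W.
  exact: (@eval_CComp_total 1 cU [:: progc; inputc]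
            [:: fun xs => unpair_prog (nth 0 xs 0); fun xs => unpair_input (nth 0 xs 0)]
            [:: N] W (conj computes_progc (conj computes_inputc I)) erefl).
rewrite eval_CComp2.
split=> [[N' [W [/(computes_proj 1 0 [:: N]) HN /HcU HW /(computes_gluec [:: N'; W]) Hy]]] | [W HW ->]].
  by exists W => //; rewrite Hy // (HN erefl).
exists N, W; split; first exact/(computes_proj 1 0 [:: N]).
  exact/HcU.
exact/(computes_gluec [:: N; W]).
Qed.

Lemma pcomputable_concat_machine {U} : pcomputable2 U -> pcomputable1 (concat_machine U).
Proof.
case=> cU HU; exists (concatc cU) => q r; rewrite eval_concatc /concat_machine.
set p := unpair_prog (enc q); set u := unpair_input (enc q).
have HUdec w : U (dec p) (dec u) = Some w <-> eval cU [:: p; u] (enc w).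
  by rewrite HU !enc_dec.
split=> [| [W HW Hr]].
  case E: U => [w|] //= [<-]; exists (enc w); first exact/HUdec.
  by rewrite enc_dec.
have /HUdec -> : eval cU [:: p; u] (enc (dec W)) by rewrite enc_dec.
by rewrite /= enc_dec -Hr dec_enc.
Qed.

Lemma concat_machine_pair {U u p v} :
  U p u = Some v -> concat_machine U (dec (pair_code u p)) = Some (u ++ v).
Proof.
move=> Hv; have [Hones Hprog Hinput] := unpair_code u p.
rewrite /concat_machine /glue enc_dec Hprog Hinput Hones !dec_enc Hv /=.
by rewrite -[u ++ v]dec_enc enc_cat.
Qed.

(** * Complexity of a block following a random prefix *)

Lemma K1_le {U0 q u} : U0 q = Some u -> K1 U0 u <= size q.
Proof.
move=> Hq; rewrite /K1; case: pselect => [h | []]; last first.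
  by exists (size q); apply/asboolP; exists q.
by case: ex_minnP => n _; apply; apply/asboolP; exists q.
Qed.

Lemma K2_spec {U u v} : (exists q, U q v = Some u) ->
  exists2 p, size p = K2 U u v & U p v = Some u.
Proof.
move=> [q Hq]; rewrite /K2; case: pselect => [h | []]; last first.
  by exists (size q); apply/asboolP; exists q.
by case: ex_minnP => n /asboolP [p [Hp1 Hp2]] _; exists p.
Qed.

Lemma universal2_total {U} : universal2 U -> forall u v, exists q, U q v = Some u.
Proof.
case=> _ HU u v.
have Hid : pcomputable2 (fun p _ => Some p).
  exists (CProj 0) => p w r; split=> [[->] | H]; first by constructor.
  have Epr : enc r = enc p by inversion H.
  by rewrite (enc_inj _ _ Epr).
by have [c /(_ u v u erefl) [q [_ Hq]]] := HU _ Hid; exists q.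
Qed.

Lemma K1_cat_le {U0 U} : universal1 U0 -> universal2 U ->
  exists C, forall u v, K1 U0 (u ++ v) <= K2 U v u + 2 * size u + C.
Proof.
move=> [_ HU0] HU; have [c Hc] := HU0 _ (pcomputable_concat_machine HU.1).
exists (c + 3) => u v; have [p Hp Hpv] := K2_spec (universal2_total HU v u).
have [q [Hq HUq]] := Hc _ _ (concat_machine_pair Hpv).
by have := K1_le HUq; have := size_dec_pair_code u p; lia.
Qed.

Lemma size_sub x m n : size (sub x m n) = n.+1 - m.
Proof. by rewrite size_mkseq. Qed.

Lemma sub_cat x m n0 n1 : 0 < m <= n0.+1 -> n0 <= n1 ->
  sub x m n1 = sub x m n0 ++ sub x n0.+1 n1.
Proof.
move=> /andP [m_gt0 m_le] n01; rewrite /sub /mkseq.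
have -> : n1.+1 - m = (n0.+1 - m) + (n1 - n0) by lia.
rewrite iotaD map_cat add0n -[n1.+1 - n0.+1]/(n1 - n0); congr (_ ++ _).
rewrite -[n0.+1 - m]addn0 iotaDl -map_comp; apply: eq_map => i /=.
by congr x; lia.
Qed.

Lemma INR_addn m n : INR (m + n) = (INR m + INR n)%R.
Proof. by rewrite -plusE plus_INR. Qed.

Lemma INR_muln m n : INR (m * n) = (INR m * INR n)%R.
Proof. by rewrite -multE mult_INR. Qed.

Lemma INR_subn m n : n <= m -> INR (m - n) = (INR m - INR n)%R.
Proof. by move=> /leP Hnm; rewrite -minusE minus_INR. Qed.

Lemma K2_block_gt {U0 U C x tau sigma k} :
  (forall u v, K1 U0 (u ++ v) <= K2 U v u + 2 * size u + C) ->
  (0 < sigma)%R -> (sigma < tau)%R -> has_rate U0 x tau ->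
  (3 <= INR k * (tau - sigma))%R ->
  exists N, forall n0, N <= n0 ->
    (sigma * INR ((k.+1 * n0).+1 - n0) <
     INR (K2 U (sub x n0.+1 (k.+1 * n0).+1) (sub x 1 n0)))%R.
Proof.
move=> Hcat sigma_gt0 sigma_lt [Nr Hrate] Hk; exists (maxn Nr C.+1) => n0.
rewrite geq_max => /andP [Nr_le C_lt]; set n1 := (k.+1 * n0).+1.
have n01 : n0 <= n1 by rewrite /n1; lia.
have := Hcat (sub x 1 n0) (sub x n0.+1 n1).
rewrite -sub_cat //= size_sub subn1 /= => /leP /le_INR.
have := Hrate n1 (leq_trans Nr_le n01).
have -> : n1 - n0 = (k * n0).+1 by rewrite /n1; lia.
rewrite /n1 !INR_addn INR_0 !S_INR !INR_muln !S_INR.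
have := le_INR _ _ (leP C_lt); rewrite S_INR.
have : (3 * INR n0 <= INR k * (tau - sigma) * INR n0)%R
  by apply: Rmult_le_compat_r => //; apply: pos_INR.
have := pos_INR n0; nra.
Qed.

Lemma tail_complexity_gt U0 U : universal1 U0 -> universal2 U ->
  forall (x : nat -> bool) (tau sigma : R),
    (0 < sigma)%R -> (sigma < tau)%R -> has_rate U0 x tau ->
    exists N : nat, forall n0 : nat, (N <= n0)%N ->
      exists n1 : nat, (n0 < n1)%N /\
        (sigma * INR (n1 - n0) < INR (K2 U (sub x n0.+1 n1) (sub x 1 n0)))%R.
Proof.
move=> HU0 HU x tau sigma sigma_gt0 sigma_lt Hrate; have [C Hcat] := K1_cat_le HU0 HU.
have [k Hk] := INR_unbounded (3 / (tau - sigma)).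
have Hk3 : (3 <= INR k * (tau - sigma))%R.
  have gap_gt0 : (0 < tau - sigma)%R by lra.
  by have := Rmult_lt_compat_r _ _ _ gap_gt0 Hk; rewrite /Rdiv Rmult_assoc Rinv_l; lra.
have [N HN] := K2_block_gt Hcat sigma_gt0 sigma_lt Hrate Hk3.
by exists N => n0 /HN Hn0; exists (k.+1 * n0).+1; split=> //; lia.
Qed.

Definition threec := CComp CSucc [:: CComp CSucc [:: onec]].
Lemma computes_threec n : computes n threec (fun _ => 3).
Proof. exact: computes_comp1 computes_succ (computes_comp1 computes_succ (computes_onec n)). Qed.

(* [gap k a b c d = 0] iff [3 <= k (a/b - c/d)], for positive [b] and [d]. *)
Definition gap k a b c d := 3 * (b * d) - k * (a * d - c * b).

Definition gapc :=
  CComp subc [:: CComp mulc [:: CProj 0; CComp subc [:: CComp mulc [:: CProj 4; CProj 3];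
                                                         CComp mulc [:: CProj 2; CProj 5]]];
                 CComp mulc [:: threec; CComp mulc [:: CProj 3; CProj 5]]].

Lemma computes_gapc : computes 6 gapc
  (fun xs => gap (nth 0 xs 0) (nth 0 xs 2) (nth 0 xs 3) (nth 0 xs 4) (nth 0 xs 5)).
Proof.
have Hmul i j := computes_comp2 computes_mulc (computes_proj 6 i) (computes_proj 6 j).
exact: computes_comp2 computes_subc
  (computes_comp2 computes_mulc (computes_proj 6 0) (computes_comp2 computes_subc (Hmul 4 3) (Hmul 2 5)))
  (computes_comp2 computes_mulc (computes_threec 6) (Hmul 3 5)).
Qed.

Definition n1c := CComp CSucc [:: CComp mulc [:: CComp CSucc [:: CMu gapc]; CProj 0]].

Lemma eval_n1c xs k :
  eval (CMu gapc) xs k -> eval n1c xs (k.+1 * nth 0 xs 0).+1.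
Proof.
move=> Hk; apply: (eComp (ys := [:: k.+1 * nth 0 xs 0])); last exact: eSucc.
constructor; last constructor; apply/eval_CComp2; exists k.+1, (nth 0 xs 0); split.
- by apply: (eComp (ys := [:: k])); [constructor; last constructor | exact: eSucc].
- exact: eProj.
- exact/(computes_mulc [:: k.+1; nth 0 xs 0]).
Qed.

Lemma eval_search_gap {a b c d} : c * b < a * d ->
  exists2 k, 3 * (b * d) <= k * (a * d - c * b) &
             forall n0, eval (CMu gapc) [:: n0; a; b; c; d] k.
Proof.
move=> cb_lt; have gap0 : exists k, gap k a b c d == 0.
  by exists (3 * (b * d)); rewrite /gap subn_eq0; apply: leq_pmulr; rewrite subn_gt0.
case: (ex_minnP gap0) => k /eqP gap_k k_min; exists k; first by rewrite -subn_eq0; apply/eqP.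
move=> n0; apply/(eval_CMu (xs := [:: n0; a; b; c; d]) k computes_gapc erefl).
by split=> // z z_lt /eqP /k_min; rewrite leqNgt z_lt.
Qed.

Lemma INR_div_lt_muln {a b c d} : 0 < b -> 0 < d ->
  (INR c / INR d < INR a / INR b)%R -> c * b < a * d.
Proof.
move=> b_gt0 d_gt0 Hlt; have bR : (0 < INR b)%R by apply/lt_0_INR/ltP.
have dR : (0 < INR d)%R by apply/lt_0_INR/ltP.
apply/ltP/INR_lt; rewrite !INR_muln.
have := Rmult_lt_compat_r (INR b * INR d) _ _ (Rmult_lt_0_compat _ _ bR dR) Hlt.
have -> : (INR c / INR d * (INR b * INR d) = INR c * INR b)%R by field; lra.
by have -> : (INR a / INR b * (INR b * INR d) = INR a * INR d)%R by field; lra.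
Qed.

Lemma gap_le_INR {a b c d k} : 0 < b -> 0 < d -> 3 * (b * d) <= k * (a * d - c * b) ->
  (3 <= INR k * (INR a / INR b - INR c / INR d))%R.
Proof.
move=> b_gt0 d_gt0 Hgap; have bR : (0 < INR b)%R by apply/lt_0_INR/ltP.
have dR : (0 < INR d)%R by apply/lt_0_INR/ltP.
have cb_lt : c * b < a * d.
  rewrite -subn_gt0; apply: contraTT Hgap; rewrite -leqNgt leqn0 => /eqP ->.
  by rewrite muln0 -ltnNge !muln_gt0 b_gt0 d_gt0.
move/leP/le_INR: Hgap; rewrite !INR_muln INR_subn ?(ltnW cb_lt) // !INR_muln => Hgap.
apply: (Rmult_le_reg_r (INR b * INR d)); first exact: Rmult_lt_0_compat.
have -> : (INR k * (INR a / INR b - INR c / INR d) * (INR b * INR d) =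
           INR k * (INR a * INR d - INR c * INR b))%R by field; lra.
by move: Hgap; change (INR 3) with (1 + 1 + 1)%R; lra.
Qed.

Lemma n1c_tail_complexity_gt U0 U : universal1 U0 -> universal2 U ->
  forall (x : nat -> bool) (a b c d : nat),
    (0 < b)%N -> (0 < d)%N ->
    (0 < INR c / INR d)%R -> (INR c / INR d < INR a / INR b)%R ->
    has_rate U0 x (INR a / INR b) ->
    exists N : nat, forall n0 : nat, (N <= n0)%N ->
      exists n1 : nat, eval n1c [:: n0; a; b; c; d] n1 /\ (n0 < n1)%N /\
        (INR c / INR d * INR (n1 - n0) <
           INR (K2 U (sub x n0.+1 n1) (sub x 1 n0)))%R.
Proof.
move=> HU0 HU x a b c d b_gt0 d_gt0 cd_gt0 cd_lt Hrate.
have [C Hcat] := K1_cat_le HU0 HU.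
have [k Hgap Hk] := eval_search_gap (INR_div_lt_muln b_gt0 d_gt0 cd_lt).
have [N HN] := K2_block_gt Hcat cd_gt0 cd_lt Hrate (gap_le_INR b_gt0 d_gt0 Hgap).
exists N => n0 /HN Hn0; exists (k.+1 * n0).+1; split; last by split=> //; lia.
exact: eval_n1c (Hk n0).
Qed.

Theorem lemma4p1 (U0 : machine1) (U : machine2) :
  universal1 U0 -> universal2 U ->
  (forall (x : nat -> bool) (tau sigma : R),
      (0 < tau)%R -> (0 < sigma)%R -> (sigma < tau)%R -> has_rate U0 x tau ->
      exists N : nat, forall n0 : nat, (N <= n0)%N ->
        exists n1 : nat, (n0 < n1)%N /\
          (sigma * INR (n1 - n0) < INR (K2 U (sub x n0.+1 n1) (sub x 1 n0)))%R)
  /\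
  (exists f : code,
    forall (x : nat -> bool) (a b c d : nat),
      (0 < b)%N -> (0 < d)%N ->
      (0 < INR c / INR d)%R -> (INR c / INR d < INR a / INR b)%R ->
      has_rate U0 x (INR a / INR b) ->
      exists N : nat, forall n0 : nat, (N <= n0)%N ->
        exists n1 : nat, eval f [:: n0; a; b; c; d] n1 /\ (n0 < n1)%N /\
          (INR c / INR d * INR (n1 - n0) <
             INR (K2 U (sub x n0.+1 n1) (sub x 1 n0)))%R).
Proof.
move=> HU0 HU; split=> [x tau sigma _ | ]; first exact: tail_complexity_gt.
by exists n1c; apply: n1c_tail_complexity_gt.
Qed.
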